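(* The sublinear perceptron takes $O( \varepsilon^{-2}\log n )$ iterations, with a total running time of $ {O}( \varepsilon^{-2}(n +d)\log n )$.
   Context: The sublinear perceptron is the following algorithm. Input: $\varepsilon>0$ and a matrix $A \in \mathbb{R}^{n \times d}$ whose rows $A_i$ all lie in the Euclidean unit ball $\mathbb{B}\subset\mathbb{R}^d$ (entries $A_{i,j}$ are assumed retrievable in constant time). Set $T \gets 200^2 \varepsilon^{-2}\log n$, $y_1 \gets 0$, $w_1 \gets \mathbf{1}_n$ (the all-ones $n$-vector), $\eta\gets \frac{1}{100} \sqrt{\frac{\log n}{T}}$. For $t=1,\dots,T$: let $p_t \gets w_t/\|w_t\|_1$ and $x_t \gets y_t/\max\{1,\|y_t\|\}$; choose $i_t\in[n]$ with probability $p_t(i)$; set $y_{t+1} \gets y_t + \frac{1}{\sqrt{2T}} A_{i_t}$; choose $j_t\in[d]$ with probability $x_t(j)^2/\|x_t\|^2$; for each $i\in[n]$ set $\tilde v_t(i) \gets A_i(j_t)\|x_t\|^2/x_t(j_t)$, $v_t(i) \gets \mathrm{clip}(\tilde v_t(i), 1/\eta)$ where $\mathrm{clip}(z,V)=\min\{V,\max\{-V,z\}\}$, and $w_{t+1}(i) \gets w_t(i)(1-\eta v_t(i)+\eta^2 v_t(i)^2)$. Return $\bar{x} = \frac{1}{T}\sum_t x_t$. *)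

From HB Require Import structures.
From mathcomp Require Import all_boot all_order all_algebra.
From mathcomp Require Import reals exp.
Set Implicit Arguments. Unset Strict Implicit. Unset Printing Implicit Defensive.
Import Order.TTheory GRing.Theory Num.Theory.
Local Open Scope ring_scope.

(* Unit-cost RAM model: a computation returns its value together with *)
(* the number of elementary operations (arithmetic operation on reals, *)
(* sqrt/ln, comparison, entry read/write) it performed.                *)
Definition M (A : Type) := (A * nat)%type.
Definition ret {A : Type} (a : A) : M A := (a, 0%N).
Definition tick {A : Type} (a : A) : M A := (a, 1%N).
Definition bind {A B : Type} (m : M A) (f : A -> M B) : M B :=
  let: (b, c') := f m.1 in (b, (m.2 + c')%N).

Fixpoint loop_from {S : Type} (k i0 : nat) (body : nat -> S -> M S) (s : S) : M S :=
  match k with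
  | 0 => ret s
  | k'.+1 => bind (body i0 s) (loop_from k' i0.+1 body)
  end.
Definition loop {S : Type} (k : nat) (body : nat -> S -> M S) (s : S) : M S :=
  loop_from k 0 body s.

Section Perceptron.
Variable R : realType.

(* vectors are stored as functions nat -> R (arrays); a write costs one op *)
Definition upd (v : nat -> R) (k : nat) (a : R) : nat -> R :=
  fun j => if j == k then a else v j.

(* constant-time access to A_{i,j} (0 outside the index range) *)
Definition entry (n d : nat) (A : 'M[R]_(n, d)) (i j : nat) : R :=
  match @insub _ (fun k => (k < n)%N) 'I_n i, @insub _ (fun k => (k < d)%N) 'I_d j with
  | Some i', Some j' => A i' j'
  | _, _ => 0
  end.

Definition clip (z V : R) : R := Num.min V (Num.max (- V) z).

(* Sampling an index in [0,k) with probability q i / tot, from a uniform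
   sample u in [0,1), by a linear scan of the cumulative weights. *)
Definition sample (k : nat) (q : nat -> R) (tot u : R) : M nat :=
  bind (loop k (fun i (st : R * option nat) =>
          let acc := st.1 + q i in
          tick (acc, match st.2 with
                     | Some _ => st.2
                     | None => if u * tot < acc then Some i else None
                     end)) (0, None))
       (fun st => ret (odflt k.-1 st.2)).

Definition Tn (n : nat) (eps : R) : nat :=
  `|Num.ceil (200%:R ^+ 2 / eps ^+ 2 * ln (n%:R : R))|%N.
Definition eta_of (n : nat) (eps : R) : R :=
  100%:R^-1 * Num.sqrt (ln (n%:R : R) / (Tn n eps)%:R).

(* one iteration t; state (w_t, y_t, s_t) with s_t = sum_{t'<t} x_t' *)
Definition step (n d : nat) (A : 'M[R]_(n, d)) (T : nat) (eta u1 u2 : R)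
  (st : (nat -> R) * (nat -> R) * (nat -> R)) :
  M ((nat -> R) * (nat -> R) * (nat -> R)) :=
  let: (w, y, s) := st in
  bind (loop n (fun i acc => tick (acc + w i)) 0) (fun W =>
  bind (sample n w W u1) (fun it =>
  bind (loop d (fun j acc => tick (acc + y j ^+ 2)) 0) (fun ny2 =>
  bind (tick (Num.max 1 (Num.sqrt ny2))) (fun m =>
  bind (loop d (fun j x => tick (upd x j (y j / m))) (fun _ => 0)) (fun x =>
  bind (loop d (fun j s' => tick (upd s' j (s' j + x j))) s) (fun s' =>
  bind (loop d (fun j y' => tick (upd y' j (y' j + entry A it j / Num.sqrt (2 * T%:R))))
             y) (fun y' =>
  bind (loop d (fun j acc => tick (acc + x j ^+ 2)) 0) (fun nx2 =>
  bind (sample d (fun j => x j ^+ 2) nx2 u2) (fun jt =>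
  bind (loop n (fun i w' =>
          let vt := entry A i jt * nx2 / x jt in
          let v := clip vt eta^-1 in
          tick (upd w' i (w' i * (1 - eta * v + eta ^+ 2 * v ^+ 2)))) w) (fun w' =>
  ret (w', y', s'))))))))))).

(* The sublinear perceptron; u1 t, u2 t are the uniform [0,1) random samples
   used at iteration t.  Returns xbar together with the operation count. *)
Definition perceptron (n d : nat) (A : 'M[R]_(n, d)) (eps : R) (u1 u2 : nat -> R)
  : M (nat -> R) :=
  let T := Tn n eps in
  let eta := eta_of n eps in
  bind (tick tt) (fun _ =>                                  (* compute T, eta *)
  bind (loop n (fun i w => tick (upd w i 1)) (fun _ => 0)) (fun w0 =>
  bind (loop d (fun j y => tick (upd y j 0)) (fun _ => 0)) (fun y0 =>
  bind (loop d (fun j s => tick (upd s j 0)) (fun _ => 0)) (fun s0 =>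
  bind (loop T (fun t st => step A T eta (u1 t) (u2 t) st) (w0, y0, s0)) (fun st =>
  loop d (fun j xb => tick (upd xb j (st.2 j / T%:R))) (fun _ => 0)))))).

Definition iterations (n : nat) (eps : R) : nat := Tn n eps.

Definition running_time (n d : nat) (A : 'M[R]_(n, d)) (eps : R) (u1 u2 : nat -> R) : nat :=
  (perceptron A eps u1 u2).2.

End Perceptron.

(* Every loop of the algorithm has a body of constant cost, so the operation
   count is the explicit polynomial [1 + n + 3d + T (3n + 6d + 1)], which is at
   most [3 (n + d) + 7 (n + d) T].  Since [n >= 2] and [eps <= 1], the scale [eps^-2 ln n] is at
   least [ln 2], so the rounding in [T = ceil(200^2 eps^-2 ln n)] is absorbed
   into a constant multiple of [eps^-2 ln n]. *)
From HB Require Import structures.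
From mathcomp Require Import all_boot all_order all_algebra.
From mathcomp Require Import reals exp.
From mathcomp Require Import zify ring lra.
Set Implicit Arguments. Unset Strict Implicit. Unset Printing Implicit Defensive.
Import Order.TTheory GRing.Theory Num.Theory.
Local Open Scope ring_scope.

Lemma cost_bind (A B : Type) (m : M A) (f : A -> M B) :
  (bind m f).2 = (m.2 + (f m.1).2)%N.
Proof. by rewrite /bind; case: (f m.1). Qed.

Lemma cost_loop_from (S : Type) k i0 (body : nat -> S -> M S) s c :
  (forall i s, (body i s).2 = c) -> (loop_from k i0 body s).2 = (k * c)%N.
Proof.
move=> body_c; elim: k i0 s => [|k IHk] i0 s //=.
by rewrite cost_bind IHk body_c mulSn.
Qed.

Lemma cost_loop (S : Type) k (body : nat -> S -> M S) s c :
  (forall i s, (body i s).2 = c) -> (loop k body s).2 = (k * c)%N.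
Proof. exact: cost_loop_from. Qed.

Lemma cost_loop_tick (S : Type) k (f : nat -> S -> S) s :
  (loop k (fun i s => tick (f i s)) s).2 = k.
Proof. by rewrite (@cost_loop _ _ _ _ 1%N) ?muln1. Qed.

Section Cost.
Variable R : realType.

Lemma cost_step n d (A : 'M[R]_(n, d)) T eta u1 u2 st :
  (step A T eta u1 u2 st).2 = (3 * n + 6 * d + 1)%N.
Proof.
by case: st => [[w y] s]; rewrite /step /= !cost_loop_tick; lia.
Qed.

Lemma running_timeE n d (A : 'M[R]_(n, d)) eps u1 u2 :
  running_time A eps u1 u2 = (1 + n + 3 * d + Tn n eps * (3 * n + 6 * d + 1))%N.
Proof.
rewrite /running_time /perceptron !cost_bind /= !cost_loop_tick.
rewrite (@cost_loop _ _ _ _ (3 * n + 6 * d + 1)%N) => [|i st]; last exact: cost_step.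
lia.
Qed.

Lemma running_time_le n d (A : 'M[R]_(n, d)) eps u1 u2 : (0 < n)%N ->
  (running_time A eps u1 u2 <= 3 * (n + d) + 7 * (n + d) * Tn n eps)%N.
Proof. by move=> n_gt0; rewrite running_timeE; nia. Qed.

End Cost.

Section Iterations.
Variable R : realType.

Lemma Tn_le (n : nat) (eps : R) :
  0 <= 200%:R ^+ 2 / eps ^+ 2 * ln (n%:R : R) ->
  (Tn n eps)%:R <= 200%:R ^+ 2 / eps ^+ 2 * ln (n%:R : R) + 1.
Proof.
rewrite /Tn natr_absz; set x := _ * ln _ => x_ge0.
have ceil_ge0 : 0 <= Num.ceil x by rewrite ceil_ge0; lra.
rewrite ger0_norm //; have := ceilB1_lt x; rewrite intrB /=; lra.
Qed.

Lemma ln2_le_scale (n : nat) (eps : R) : (2 <= n)%N -> 0 < eps <= 1 ->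
  ln 2%:R <= eps ^-2 * ln (n%:R : R).
Proof.
move=> n_ge2 /andP[eps_gt0 eps_le1].
have eps2_ge1 : 1 <= eps ^-2 by rewrite invf_ge1 ?exprn_gt0 // expr_le1 // ltW.
have ln_ge : ln 2%:R <= ln (n%:R : R) by rewrite ler_ln ?posrE ?ltr0n ?ler_nat //; lia.
have ln2_ge0 : 0 <= ln (2%:R : R) by rewrite ln_ge0 // ler1n.
by rewrite -[ln _]mul1r ler_pM.
Qed.

Lemma one_le_inv_ln2_scale (n : nat) (eps : R) : (2 <= n)%N -> 0 < eps <= 1 ->
  1 <= (ln 2%:R)^-1 * (eps ^-2 * ln (n%:R : R)).
Proof.
move=> n_ge2 eps01; have ln2_gt0 : 0 < ln (2%:R : R) by rewrite ln_gt0 // ltr1n.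
rewrite -[leLHS](mulVf (lt0r_neq0 ln2_gt0)) ler_pM2l ?invr_gt0 //.
exact: ln2_le_scale.
Qed.

Definition iteration_const : R := 200%:R ^+ 2 + (ln 2%:R)^-1.

Lemma one_le_iteration_scale (n : nat) (eps : R) : (2 <= n)%N -> 0 < eps <= 1 ->
  1 <= iteration_const * (eps ^-2 * ln (n%:R : R)).
Proof.
move=> n_ge2 eps01; apply: (le_trans (one_le_inv_ln2_scale n_ge2 eps01)).
apply: ler_wpM2r; last by rewrite lerDr exprn_ge0 ?ler0n.
by apply: le_trans (ln2_le_scale n_ge2 eps01); rewrite ln_ge0 ?ler1n.
Qed.

Lemma Tn_le_scale (n : nat) (eps : R) : (2 <= n)%N -> 0 < eps <= 1 ->
  (Tn n eps)%:R <= iteration_const * (eps ^-2 * ln (n%:R : R)).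
Proof.
move=> n_ge2 eps01; have := one_le_inv_ln2_scale n_ge2 eps01.
have := ln2_le_scale n_ge2 eps01; set L := _ * ln _ => ln2_le_L one_le.
have ln2_gt0 : 0 < ln (2%:R : R) by rewrite ln_gt0 // ltr1n.
have L_ge0 : 0 <= L by apply: le_trans ln2_le_L; exact: ltW.
have a_ge0 : 0 <= 200%:R ^+ 2 :> R by rewrite exprn_ge0 ?ler0n.
rewrite /iteration_const mulrDl.
apply: le_trans (Tn_le _) _; first by rewrite -mulrA mulr_ge0.
by rewrite -mulrA lerD2l.
Qed.

End Iterations.

Theorem mainTheorem1 (R : realType) :
  exists C : R, 0 < C /\
  forall (n d : nat) (A : 'M[R]_(n, d)) (eps : R) (u1 u2 : nat -> R),
    (2 <= n)%N -> 0 < eps <= 1 ->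
    (forall i, \sum_j A i j ^+ 2 <= 1) ->
    (forall t, 0 <= u1 t < 1) -> (forall t, 0 <= u2 t < 1) ->
    (iterations n eps)%:R <= C * eps ^-2 * ln (n%:R : R) /\
    (running_time A eps u1 u2)%:R <= C * eps ^-2 * (n + d)%:R * ln (n%:R : R).
Proof.
have K_gt0 : 0 < iteration_const R.
  by rewrite ltr_pwDl ?exprn_gt0 ?invr_ge0 ?ltr0n ?ln_ge0 ?ler1n.
exists (10 * iteration_const R); split; first by rewrite mulr_gt0.
move=> n d A eps u1 u2 n_ge2 eps01 _ _ _.
have T_le := Tn_le_scale n_ge2 eps01.
have one_le := one_le_iteration_scale n_ge2 eps01.
set K := iteration_const R in K_gt0 T_le one_le *.
set L := eps ^-2 * _ in T_le one_le.
split.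
  have -> : 10 * K * eps ^-2 * ln (n%:R : R) = 10 * (K * L) by rewrite /L; ring.
  rewrite /iterations; lra.
have -> : 10 * K * eps ^-2 * (n + d)%:R * ln (n%:R : R) = 10 * (K * L) * (n + d)%:R.
  by rewrite /L; ring.
apply: le_trans (_ : (3 * (n + d) + 7 * (n + d) * Tn n eps)%N%:R <= _).
  by rewrite ler_nat; apply: running_time_le; exact: ltnW.
rewrite natrD !natrM; set N := (n + d)%N%:R.
have N_ge0 : 0 <= N by rewrite ler0n.
have NT_le : N * (Tn n eps)%:R <= N * (K * L) by exact: ler_wpM2l.
have N_le : N <= N * (K * L) by rewrite ler_peMr.
rewrite -mulrA; lra.
Qed.
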